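(* Let $f:U\to\mathbb{R}^3$ be a Guichard net with Lamé coefficients $H_1,H_2,H_3$, let $h_1,h_2,h_3:U\to\mathbb{R}$ be functions satisfying $$\partial_xh_3=-\tfrac{H_2}{H_3}\kappa_{13},\quad \partial_yh_3=\tfrac{H_1}{H_3}\kappa_{23},\quad \partial_zh_3=-\tfrac{H_1H_2}{H_3^2}(\kappa_{31}-\kappa_{32}),\quad h_1=h_3+\tfrac{H_2}{H_1H_3},\quad h_2=h_3-\tfrac{H_1}{H_2H_3},$$ let $c\in\mathbb{R}$, and let $f^\star_c$ be the corresponding dual system, defined by $df^\star_c=\sum_{i=1}^3h^\star_i\,\partial_if\,dx_i$ with $h^\star_i=-(h_i+c)^2+\frac{\varepsilon_i}{H_i^2}$, $(\varepsilon_1,\varepsilon_2,\varepsilon_3)=(1,1,-1)$. Then $f^\star_c$ is again a Guichard net, i.e. its Lamé coefficients $H^\star_i=h^\star_iH_i$ satisfy $(H^\star_1)^2+(H^\star_2)^2-(H^\star_3)^2=0$.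
   Context: $U\subset\mathbb{R}^3$ open connected, coordinates $(x_1,x_2,x_3)=(x,y,z)$, $\partial_i=\partial_{x_i}$. A triply orthogonal system is $f:U\to\mathbb{R}^3$ with $\det(\partial_1f,\partial_2f,\partial_3f)\ne0$ and $(\partial_if,\partial_jf)=0$ for $i\ne j$. For $(i,j,k)$ a cyclic permutation of $(1,2,3)$, $N_i=\partial_jf\times\partial_kf/|\partial_jf\times\partial_kf|$, Lamé coefficients $H_i$ by $\partial_if=H_iN_i$, rotational coefficients $\beta_{ij}=\frac1{H_i}\partial_iH_j$, and $\kappa_{ij}=-\beta_{ij}/H_j$ is the principal curvature of the coordinate surface $x_i=\mathrm{const}$ along the $x_j$-lines. A Guichard net is a triply orthogonal system with $H_1^2+H_2^2-H_3^2=0$. A map $g$ with $dg=\sum_ik_i\partial_if\,dx_i$ (a Combescure transform of $f$) has Lamé coefficients $k_iH_i$ with respect to the same $N_i$. *)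

From HB Require Import structures.
From mathcomp Require Import all_boot all_order all_algebra.
From mathcomp Require Import all_classical all_reals all_analysis.
Set Implicit Arguments. Unset Strict Implicit. Unset Printing Implicit Defensive.
Import Order.TTheory GRing.Theory Num.Theory.
Import numFieldNormedType.Exports.
Local Open Scope classical_set_scope.
Local Open Scope ring_scope.

Section Defs.
Variable R : realType.
Notation V := 'rV[R]_3.

Definition I1 : 'I_3 := @Ordinal 3 0 isT.
Definition I2 : 'I_3 := @Ordinal 3 1 isT.
Definition I3 : 'I_3 := @Ordinal 3 2 isT.

(* standard basis vector e_i, i in {0,1,2} standing for x_1,x_2,x_3 *)
Definition evec (i : 'I_3) : V := delta_mx 0 i.

Definition partial {W : normedModType R} (g : V -> W) (i : 'I_3) (p : V) : W :=
  'D_(evec i) g p.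

Definition dot (u v : V) : R := (u *m v^T) 0 0.
Definition vnorm (u : V) : R := Num.sqrt (dot u u).

Definition cross (u v : V) : V :=
  \row_k (if k == 0 :> nat then u 0 1 * v 0 2 - u 0 2 * v 0 1
          else if k == 1 :> nat then u 0 2 * v 0 0 - u 0 0 * v 0 2
          else u 0 0 * v 0 1 - u 0 1 * v 0 0).

Definition succ3 (i : 'I_3) : 'I_3 := inord (i.+1 %% 3).

Definition normal (f : V -> V) (i : 'I_3) (p : V) : V :=
  let j := succ3 i in let k := succ3 j in
  let w := cross (partial f j p) (partial f k p) in
  (vnorm w)^-1 *: w.

(* Lame coefficient H_i, defined by d_i f = H_i N_i (N_i unit) *)
Definition lame (f : V -> V) (i : 'I_3) (p : V) : R :=
  dot (partial f i p) (normal f i p).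

(* Lame coefficient of a Combescure transform g of f w.r.t. the N_i of f *)
Definition lame_wrt (f g : V -> V) (i : 'I_3) (p : V) : R :=
  dot (partial g i p) (normal f i p).

Definition beta (f : V -> V) (i j : 'I_3) (p : V) : R :=
  (lame f i p)^-1 * partial (lame f j) i p.

Definition kappa (f : V -> V) (i j : 'I_3) (p : V) : R :=
  - beta f i j p / lame f j p.

Definition triply_orthogonal (U : set V) (f : V -> V) : Prop :=
  forall p, U p ->
    \det (\matrix_(i < 3, j < 3) partial f i p 0 j) != 0 /\
    (forall i j : 'I_3, i != j -> dot (partial f i p) (partial f j p) = 0).

Definition guichard_net (U : set V) (f : V -> V) : Prop :=
  triply_orthogonal U f /\
  forall p, U p -> (lame f I1 p) ^+ 2 + (lame f I2 p) ^+ 2 - (lame f I3 p) ^+ 2 = 0.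

Definition eps (i : 'I_3) : R := if i == 2 :> nat then -1 else 1.

Definition hstar (f : V -> V) (h : 'I_3 -> V -> R) (c : R) (i : 'I_3) (p : V) : R :=
  - (h i p + c) ^+ 2 + eps i / (lame f i p) ^+ 2.

End Defs.

From HB Require Import structures.
From mathcomp Require Import all_boot all_order all_algebra.
From mathcomp Require Import all_classical all_reals all_analysis.
From mathcomp Require Import ring lra.
Import Order.TTheory GRing.Theory Num.Theory.
Import numFieldNormedType.Exports.
Set Implicit Arguments. Unset Strict Implicit. Unset Printing Implicit Defensive.
Local Open Scope ring_scope.

(* Put b = h_3 + c.  Using h_1 = h_3 + H_2/(H_1 H_3), h_2 = h_3 - H_1/(H_2 H_3)
   and H_1^2 + H_2^2 = H_3^2, the dual Lame coefficients H*_i = h*_i H_i become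
     (H*_1, H*_2) = a (H_1, H_2) + beta (-H_2, H_1),   H*_3 = -(H_3^-2 + b^2) H_3,
   with a = H_3^-2 - b^2 and beta = 2b/H_3.  The first is a rotation-dilation of
   (H_1, H_2) by the factor sqrt (a^2 + beta^2) = H_3^-2 + b^2, hence
   (H*_1)^2 + (H*_2)^2 = (H_3^-2 + b^2)^2 H_3^2 = (H*_3)^2.  The Lame coefficients
   of f are nonzero because each is a triple product of the rows of the Jacobian
   (divided by a norm), i.e. its determinant. *)

Lemma det_mx33 (K : comNzRingType) (A : 'M[K]_3) : \det A =
  A 0 0 * (A 1 1 * A 2 2 - A 1 2 * A 2 1) - A 0 1 * (A 1 0 * A 2 2 - A 1 2 * A 2 0)
  + A 0 2 * (A 1 0 * A 2 1 - A 1 1 * A 2 0).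
Proof.
have -> : A = \matrix_(i, j) A (inord i) (inord j).
  by apply/matrixP => i j; rewrite mxE !inord_val.
rewrite (expand_det_row _ 0) !big_ord_recl big_ord0 /cofactor /=.
rewrite !(expand_det_row _ 0) !big_ord_recl !big_ord0 /cofactor /= !det_mx11 !mxE.
by rewrite /bump /= ?addn0 ?add0n !modn_small //; ring.
Qed.

Lemma ord3P (i : 'I_3) : [\/ i = 0, i = 1 | i = 2].
Proof.
by case: i => -[|[|[|//]]] ?; [apply: Or31 | apply: Or32 | apply: Or33]; apply: val_inj.
Qed.

Lemma succ3E : [/\ succ3 0 = 1, succ3 1 = 2 & succ3 2 = 0].
Proof. by split; apply: val_inj; rewrite /= inordK. Qed.

Section TripleProduct.
Variable R : realType.
Implicit Types (u v w : 'rV[R]_3) (a : R).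

Lemma dot_sum u v : dot u v = \sum_j u 0 j * v 0 j.
Proof. by rewrite /dot mxE; apply: eq_bigr => j _; rewrite mxE. Qed.

Lemma dotE u v : dot u v = u 0 0 * v 0 0 + u 0 1 * v 0 1 + u 0 2 * v 0 2.
Proof.
rewrite dot_sum !big_ord_recl big_ord0 addr0 addrA.
by congr (_ * _ + _ * _ + _ * _); congr (_ _ _); apply: val_inj.
Qed.

Lemma dotZl a u v : dot (a *: u) v = a * dot u v.
Proof. by rewrite /dot -scalemxAl mxE. Qed.

Lemma dotZr a u v : dot u (a *: v) = a * dot u v.
Proof. by rewrite /dot linearZ /= -scalemxAr mxE. Qed.

Lemma dot0r u : dot u 0 = 0.
Proof. by rewrite /dot trmx0 mulmx0 mxE. Qed.

Lemma dot_self_le0 w : dot w w <= 0 -> w = 0.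
Proof.
move=> le0; apply/rowP => j; rewrite mxE; apply/eqP.
rewrite -sqrf_eq0 eq_le sqr_ge0 andbT (le_trans _ le0) // dot_sum (bigD1 j) //=.
by rewrite expr2 lerDl sumr_ge0 // => k _; rewrite -expr2 sqr_ge0.
Qed.

Lemma vnorm_neq0 u w : dot u w != 0 -> vnorm w != 0.
Proof. by apply: contraNneq => /eqP; rewrite sqrtr_eq0 => /dot_self_le0 ->; rewrite dot0r. Qed.

Lemma dot_cross_cycle u v w : dot u (cross v w) = dot v (cross w u).
Proof. by rewrite !dotE !mxE /=; ring. Qed.

Lemma det_dot_cross (A : 'M[R]_3) : \det A = dot (row 0 A) (cross (row 1 A) (row 2 A)).
Proof. by rewrite det_mx33 dotE !mxE /=; ring. Qed.

Lemma det_rows_cycle (u : 'I_3 -> 'rV[R]_3) (i : 'I_3) :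
  dot (u i) (cross (u (succ3 i)) (u (succ3 (succ3 i)))) = \det (\matrix_(k, j) u k 0 j).
Proof.
have rowE k : row k (\matrix_(k, j) u k 0 j) = u k by apply/rowP => j; rewrite !mxE.
have [s0 s1 s2] := succ3E.
rewrite det_dot_cross !rowE.
case: (ord3P i) => ->; rewrite ?s0 ?s1 ?s2 ?s0 //.
  by rewrite [RHS]dot_cross_cycle.
by rewrite [LHS]dot_cross_cycle.
Qed.

End TripleProduct.

Lemma lame_neq0 (R : realType) (f : 'rV[R]_3 -> 'rV[R]_3) (p : 'rV[R]_3) (i : 'I_3) :
  \det (\matrix_(k < 3, j < 3) partial f k p 0 j) != 0 -> lame f i p != 0.
Proof.
rewrite -(det_rows_cycle (partial f ^~ p) i) => det_neq0.
by rewrite /lame /normal dotZr mulf_neq0 // invr_eq0 (vnorm_neq0 det_neq0).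
Qed.

Lemma lame_wrt_combescure (R : realType) (f g : 'rV[R]_3 -> 'rV[R]_3) (k : R) i p :
  partial g i p = k *: partial f i p -> lame_wrt f g i p = k * lame f i p.
Proof. by rewrite /lame_wrt => ->; rewrite dotZl. Qed.

Section DualLame.
Variables (F : fieldType) (H1 H2 H3 b : F).
Hypotheses (H1_neq0 : H1 != 0) (H2_neq0 : H2 != 0) (H3_neq0 : H3 != 0).
Hypothesis guichard : H1 ^+ 2 + H2 ^+ 2 = H3 ^+ 2.

Lemma dual_lame1 :
  (- (b + H2 / (H1 * H3)) ^+ 2 + 1 / H1 ^+ 2) * H1 =
  (H3 ^- 2 - b ^+ 2) * H1 - (2 * b / H3) * H2.
Proof.
have -> : 1 / H1 ^+ 2 = (H1 ^+ 2 + H2 ^+ 2) / (H1 ^+ 2 * H3 ^+ 2).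
  by rewrite guichard; field; rewrite H1_neq0 H3_neq0.
by field; rewrite H1_neq0 H3_neq0.
Qed.

Lemma dual_lame2 :
  (- (b - H1 / (H2 * H3)) ^+ 2 + 1 / H2 ^+ 2) * H2 =
  (H3 ^- 2 - b ^+ 2) * H2 + (2 * b / H3) * H1.
Proof.
have -> : 1 / H2 ^+ 2 = (H1 ^+ 2 + H2 ^+ 2) / (H2 ^+ 2 * H3 ^+ 2).
  by rewrite guichard; field; rewrite H2_neq0 H3_neq0.
by field; rewrite H2_neq0 H3_neq0.
Qed.

Lemma dual_lame_guichard :
  ((- (b + H2 / (H1 * H3)) ^+ 2 + 1 / H1 ^+ 2) * H1) ^+ 2
  + ((- (b - H1 / (H2 * H3)) ^+ 2 + 1 / H2 ^+ 2) * H2) ^+ 2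
  - ((- b ^+ 2 + (-1) / H3 ^+ 2) * H3) ^+ 2 = 0.
Proof.
set a := H3 ^- 2 - b ^+ 2; set beta := 2 * b / H3.
have rotation : (a * H1 - beta * H2) ^+ 2 + (a * H2 + beta * H1) ^+ 2
    = (a ^+ 2 + beta ^+ 2) * (H1 ^+ 2 + H2 ^+ 2) by ring.
have dilation : a ^+ 2 + beta ^+ 2 = (H3 ^- 2 + b ^+ 2) ^+ 2.
  by rewrite /a /beta; field; rewrite H3_neq0.
rewrite dual_lame1 dual_lame2 rotation dilation guichard.
by field; rewrite H3_neq0.
Qed.

End DualLame.

Theorem proposition4p4 (R : realType) (U : set 'rV[R]_3)
    (f fs : 'rV[R]_3 -> 'rV[R]_3) (h : 'I_3 -> 'rV[R]_3 -> R) (c : R) :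
  open U -> connected U ->
  (forall p, U p -> differentiable f p /\
     (forall i : 'I_3, differentiable (partial f i) p)) ->
  guichard_net U f ->
  (forall p, U p -> differentiable (h I3) p) ->
  (forall p, U p ->
     partial (h I3) I1 p = - (lame f I2 p / lame f I3 p) * kappa f I1 I3 p /\
     partial (h I3) I2 p = (lame f I1 p / lame f I3 p) * kappa f I2 I3 p /\
     partial (h I3) I3 p = - (lame f I1 p * lame f I2 p / (lame f I3 p) ^+ 2)
                              * (kappa f I3 I1 p - kappa f I3 I2 p) /\
     h I1 p = h I3 p + lame f I2 p / (lame f I1 p * lame f I3 p) /\
     h I2 p = h I3 p - lame f I1 p / (lame f I2 p * lame f I3 p)) ->
  (forall p, U p -> differentiable fs p /\
     forall i : 'I_3, partial fs i p = hstar f h c i p *: partial f i p) ->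
  forall p, U p ->
    (lame_wrt f fs I1 p) ^+ 2 + (lame_wrt f fs I2 p) ^+ 2
      - (lame_wrt f fs I3 p) ^+ 2 = 0.
Proof.
move=> _ _ _ [orthogonal guichard] _ hE fsE p Up.
have [det_neq0 _] := orthogonal p Up.
have [_ [_ [_ [h1E h2E]]]] := hE p Up.
have [_ dfsE] := fsE p Up.
rewrite !(lame_wrt_combescure (dfsE _)) /hstar /eps /=.
have -> : h I1 p + c = (h I3 p + c) + lame f I2 p / (lame f I1 p * lame f I3 p).
  by rewrite h1E; ring.
have -> : h I2 p + c = (h I3 p + c) - lame f I1 p / (lame f I2 p * lame f I3 p).
  by rewrite h2E; ring.
have lame_f_neq0 i : lame f i p != 0 := lame_neq0 i det_neq0.
exact: (dual_lame_guichard _ (lame_f_neq0 I1) (lame_f_neq0 I2) (lame_f_neq0 I3)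
          (subr0_eq (guichard p Up))).
Qed.
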